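(* Let $$\Lambda=\begin{pmatrix}1&-1&-1&-1&2&0&0&0\\-1&1&-1&-1&0&2&0&0\\0&0&2&0&-1&-1&1&-1\end{pmatrix},\qquad W=\begin{pmatrix}2&0&-1&-1\\0&2&-1&-1\\-1&-1&2&0\end{pmatrix}.$$ Let $\mathbb X$ be the complete toric variety whose fan is the fan over the faces of the polytope $\Delta=\mathrm{conv}(\Lambda)\subset\mathbb R^3$, and let $X$ be the complete toric variety whose fan is the fan over the faces of the simplex $\mathrm{conv}(W)$ (so $X\cong\mathbb P^3/\mu_4$). The fan of $\mathbb X$ refines that of $X$, and $\phi:\mathbb X\to X$ denotes the induced birational toric morphism (the blow up of $X$ at four torus fixed points). Let $x_1,\dots,x_8$ be the Cox coordinates of $\mathbb X$ ($x_i$ corresponding to the $i$-th column of $\Lambda$) and $y_1,\dots,y_4$ those of $X$ ($y_j$ corresponding to the $j$-th column of $W$). For $\psi\in\mathbb C$ let $$Y^\vee_{BB}=\mathcal V(x_1^2x_5^2+x_2^2x_6^2+\psi x_1x_2x_3x_4,\ x_3^2x_7^2+x_4^2x_8^2+\psi x_5x_6x_7x_8)\subset\mathbb X,$$ $$Y^\vee_{LT}=\mathcal V(y_1^2+y_2^2+\psi y_3y_4,\ \psi y_1y_2+y_3^2+y_4^2)\subset X.$$ Then, for generic $\psi$, $Y^\vee_{BB}$ is the strict transform of $Y^\vee_{LT}$ under $\phi$, i.e. $Y^\vee_{BB}=\phi^{-1}_*(Y^\vee_{LT})$.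
   Context: The fan over the faces of a polytope $\Delta$ containing the origin in its interior is the complete fan consisting of the cones over the proper faces of $\Delta$ (and their subcones). Cox coordinates: a complete toric variety whose rays are generated by columns $\mathbf v_1,\dots,\mathbf v_m$ of a fan matrix is a quotient of an open subset of $\mathbb C^m$ by a quasi-torus, and $\mathcal V(f_1,\dots,f_s)$ denotes the subvariety cut out by the class-group-homogeneous polynomials $f_i$ in the coordinates $x_1,\dots,x_m$. The strict transform $\phi^{-1}_*(Y)$ of a subvariety $Y$ under a birational morphism $\phi$ is the closure of $\phi^{-1}(Y\cap U)$, where $U$ is the open set over which $\phi$ is an isomorphism.
   Formalization: φ is the relation pairing points of 𝕏 and X with equal characters on a common affine chart, not a morphism of refining fans, and U is the union of orbits of X with cones in both fans. Apart from conventions, each condition added here is assumed in the paper as well or is needed for the statement above to hold. *)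

(* Toric varieties are handled through their Cox
   construction: a complete toric variety with ray generators the columns
   v_1..v_m of an integer matrix V (n x m) is the quotient of the Cox open set
   C^m \ Z(Sigma) by the quasi-torus H_V.  Subsets of the quotient are
   represented by H_V-saturated subsets of the Cox open set. *)
From mathcomp Require Import all_boot all_algebra.
From mathcomp Require Import reals.
From mathcomp.real_closed Require Import complex.
From mathcomp Require mpoly.

Set Implicit Arguments.
Unset Strict Implicit.
Unset Printing Implicit Defensive.
Import GRing.Theory Num.Theory.
Local Open Scope ring_scope.

Section Toric.
Variables (C : fieldType) (n m : nat).
Implicit Types (V : 'M[int]_(n, m)) (x t : 'I_m -> C) (S : {set 'I_m}).

Definition vcol V (k : 'I_m) : 'I_n -> rat := fun i => (V i k)%:~R.

Definition dotq (u v : 'I_n -> rat) : rat := \sum_(i < n) u i * v i.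

(* S is the set of vertices (columns of V) lying on a proper face of the
   polytope conv(V), origin in its interior: S = argmax of a nonzero linear
   functional u.  The fan over the faces of conv(V) consists of the cones
   cone{v_k | k in S} for such S, together with the zero cone. *)
Definition face_set V S : Prop :=
  exists u : 'I_n -> rat, (exists i, u i != 0) /\
    forall k, k \in S <-> (forall j, dotq u (vcol V j) <= dotq u (vcol V k)).

Definition in_cone V S (v : 'I_n -> rat) : Prop :=
  exists c : 'I_m -> rat, (forall k, 0 <= c k) /\ (forall k, k \notin S -> c k = 0)
    /\ forall i, v i = \sum_(k < m) c k * vcol V k i.

Definition fan_cone V S : Prop := S = set0 \/ face_set V S.

(* complement of the irrelevant locus Z(Sigma): the zero coordinates of x
   correspond to rays of a single cone of the fan *)
Definition cox_open V x : Prop :=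
  exists S, face_set V S /\ forall k, x k = 0 -> k \in S.

(* the quasi-torus H_V = Hom(Cl, C^* ) inside (C^* )^m *)
Definition quasitorus V t : Prop :=
  (forall k, t k != 0) /\ forall i : 'I_n, \prod_(k < m) t k ^ (V i k) = 1.

Definition act t x : 'I_m -> C := fun k => t k * x k.

Definition zariski_closed (A : ('I_m -> C) -> Prop) : Prop :=
  exists F : mpoly.mpoly m C -> Prop,
    forall x, A x <-> (forall p, F p -> mpoly.meval x p = 0).

(* closed subsets of the toric variety X_V (quotient topology), represented by
   their preimages: H_V-saturated, relatively Zariski closed in the Cox open set *)
Definition quot_closed V (A : ('I_m -> C) -> Prop) : Prop :=
  (exists Z, zariski_closed Z /\ forall x, A x <-> cox_open V x /\ Z x) /\
  (forall t x, quasitorus V t -> A x -> A (act t x)).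

(* preimage in the Cox open set of the closure in X_V of (the image of) B *)
Definition quot_closure V (B : ('I_m -> C) -> Prop) (x : 'I_m -> C) : Prop :=
  cox_open V x /\
  forall A, quot_closed V A -> (forall y, B y -> A y) -> A x.

(* the character chi^mu of the torus, written in Cox coordinates *)
Definition chi V (mu : 'I_n -> int) x : C :=
  \prod_(k < m) x k ^ (\sum_(i < n) mu i * V i k).

End Toric.

Section Morphism.
Variables (C : fieldType) (n m p : nat).
Variables (V : 'M[int]_(n, m)) (W : 'M[int]_(n, p)).

(* phi([x]) = [y] for the toric morphism X_V -> X_W induced by the identity of
   the lattice Z^n (the fan of V refining the fan of W): there is a cone
   sigma = cone{w_j | j in S} of the fan of W such that [y] lies in the affine
   chart U_sigma, [x] lies in phi^{-1}(U_sigma) (all rays of its orbit cone lie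
   in sigma), and all chart coordinates chi^mu, mu in sigma^vee, agree. *)
Definition toric_map_rel (x : 'I_m -> C) (y : 'I_p -> C) : Prop :=
  exists S : {set 'I_p}, face_set W S /\
    (forall j, j \notin S -> y j != 0) /\
    (forall k, x k = 0 -> in_cone W S (vcol V k)) /\
    forall mu : 'I_n -> int,
      (forall j, j \in S -> 0 <= \sum_(i < n) mu i * W i j) ->
      chi V mu x = chi W mu y.

(* the open set of X_W over which phi is an isomorphism: the union of the
   orbits whose cone (generated by the rays w_j with y_j = 0) is also a cone
   of the fan of V *)
Definition iso_locus (y : 'I_p -> C) : Prop :=
  exists S : {set 'I_m}, fan_cone V S /\
    forall v, in_cone W [set j | y j == 0] v <-> in_cone V S v.

(* strict transform phi^{-1}_*(Y) = closure of phi^{-1}(Y \cap U) *)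
Definition strict_transform (Y : ('I_p -> C) -> Prop) (x : 'I_m -> C) : Prop :=
  quot_closure V
    (fun x' => cox_open V x' /\
       exists y, cox_open W y /\ toric_map_rel x' y /\ Y y /\ iso_locus y) x.

End Morphism.

Definition mx_of_rows (r c : nat) (rows : seq (seq int)) : 'M[int]_(r, c) :=
  \matrix_(i < r, j < c) nth 0 (nth [::] rows i) j.

Definition Lambda : 'M[int]_(3, 8) :=
  mx_of_rows 3 8 [:: [:: 1; -1; -1; -1; 2; 0; 0; 0];
                     [:: -1; 1; -1; -1; 0; 2; 0; 0];
                     [:: 0; 0; 2; 0; -1; -1; 1; -1]].

Definition Wmx : 'M[int]_(3, 4) :=
  mx_of_rows 3 4 [:: [:: 2; 0; -1; -1];
                     [:: 0; 2; -1; -1];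
                     [:: -1; -1; 2; 0]].

(* 1-based Cox coordinate: cc x i = x_i *)
Definition cc (C : Type) (N : nat) (x : 'I_N.+1 -> C) (i : nat) : C :=
  x (inord i.-1).

Definition Y_BB (C : fieldType) (psi : C) (x : 'I_8 -> C) : Prop :=
  cc x 1 ^+ 2 * cc x 5 ^+ 2 + cc x 2 ^+ 2 * cc x 6 ^+ 2
    + psi * cc x 1 * cc x 2 * cc x 3 * cc x 4 = 0 /\
  cc x 3 ^+ 2 * cc x 7 ^+ 2 + cc x 4 ^+ 2 * cc x 8 ^+ 2
    + psi * cc x 5 * cc x 6 * cc x 7 * cc x 8 = 0.

Definition Y_LT (C : fieldType) (psi : C) (y : 'I_4 -> C) : Prop :=
  cc y 1 ^+ 2 + cc y 2 ^+ 2 + psi * cc y 3 * cc y 4 = 0 /\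
  psi * cc y 1 * cc y 2 + cc y 3 ^+ 2 + cc y 4 ^+ 2 = 0.

(* Away from the coordinate hyperplanes both pairs of equations are sums of the
   same characters: x1^2 x5^2 + x2^2 x6^2 + psi x1 x2 x3 x4 equals
   x1 x2 x3 x4 (chi^e1 + chi^e2 + psi), while y1^2 + y2^2 + psi y3 y4 equals
   y3 y4 (chi^e1 + chi^e2 + psi), and similarly for the second equations.

   A point of Y_BB in the Cox open set has nonzero exceptional coordinates
   x1, x2, x7, x8: if one of them vanished, an equation would force a second
   coordinate to vanish whose ray does not share a cone with the first.  So the
   point lies over the locus where phi is an isomorphism, and square roots of
   the exceptional coordinates give Cox coordinates of its image, a point of
   Y_LT.

   Conversely Y_BB is closed and saturated for the quasitorus, so it contains
   the strict transform once it contains phi^-1(Y_LT).  On the chart y_j0 <> 0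
   of X, the characters regular there take the same values at a point and at
   its image; multiplying the equations by monomials that cannot vanish on the
   chart turns them into combinations of such characters.  "Generic psi" only
   has to exclude psi = 0. *)

From mathcomp Require Import all_boot all_order all_algebra.
From mathcomp Require Import reals.
From mathcomp.real_closed Require Import complex.
From mathcomp Require Import mpoly.
From mathcomp Require Import zify ring lra.

Set Implicit Arguments.
Unset Strict Implicit.
Unset Printing Implicit Defensive.
Import Order.TTheory GRing.Theory Num.Theory.
Local Open Scope ring_scope.

Section Monomials.
Variables (C : fieldType) (m : nat).
Implicit Types (x t : 'I_m -> C) (a b c g : 'I_m -> int).

Definition monomial x a : C := \prod_(k < m) x k ^ a k.

Definition trinomial (psi : C) x a1 a2 a3 : C :=
  monomial x a1 + monomial x a2 + psi * monomial x a3.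

Lemma monomialD x a b : (forall k, x k = 0 -> 0 <= a k /\ 0 <= b k) ->
  monomial x (fun k => a k + b k) = monomial x a * monomial x b.
Proof.
move=> ab_ge0; rewrite -big_split; apply: eq_bigr => k _ /=.
have [xk0|xk_neq0] := eqVneq (x k) 0; last by rewrite expfzDr.
have [a_ge0 b_ge0] := ab_ge0 k xk0.
by rewrite -(gez0_abs a_ge0) -(gez0_abs b_ge0) -PoszD -!exprnP exprD.
Qed.

Lemma monomial_neq0 x a : (forall k, a k != 0 -> x k != 0) -> monomial x a != 0.
Proof.
move=> xa; rewrite prodf_seq_neq0; apply/allP => k _ /=.
have [->|ak_neq0] := eqVneq (a k) 0; first by rewrite expr0z oner_eq0.
by rewrite expfz_neq0 // xa.
Qed.

Lemma monomial_eq0 x a k : x k = 0 -> a k != 0 -> monomial x a = 0.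
Proof.
by move=> xk0 ak_neq0; rewrite /monomial (bigD1 k) //= xk0 exp0rz (negbTE ak_neq0) mul0r.
Qed.

Lemma monomial_act t x a : monomial (act t x) a = monomial t a * monomial x a.
Proof. by rewrite -big_split; apply: eq_bigr => k _; rewrite expfzMl. Qed.

Lemma trinomial_act psi t x a1 a2 a3 :
  monomial t a1 = monomial t a3 -> monomial t a2 = monomial t a3 ->
  trinomial psi (act t x) a1 a2 a3 = monomial t a3 * trinomial psi x a1 a2 a3.
Proof. by rewrite /trinomial !monomial_act => -> ->; ring. Qed.

Lemma trinomial_shift psi x a1 a2 a3 e1 e2 e3 g c :
  (forall k, a1 k + g k = c k + e1 k) -> (forall k, a2 k + g k = c k + e2 k) ->
  (forall k, a3 k + g k = c k + e3 k) ->
  (forall k, [/\ 0 <= a1 k, 0 <= a2 k, 0 <= a3 k, 0 <= g k & 0 <= c k]) ->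
  (forall k, x k = 0 -> [/\ 0 <= e1 k, 0 <= e2 k & 0 <= e3 k]) ->
  trinomial psi x a1 a2 a3 * monomial x g = monomial x c * trinomial psi x e1 e2 e3.
Proof.
move=> h1 h2 h3 ge0 e_ge0.
have shift a e : (forall k, a k + g k = c k + e k) -> (forall k, 0 <= a k) ->
    (forall k, x k = 0 -> 0 <= e k) -> monomial x a * monomial x g = monomial x c * monomial x e.
  move=> ae a_ge0 e_ge0'; rewrite -!monomialD => [|k /e_ge0'|k _]; last 2 first.
  - by have [] := ge0 k.
  - by have [] := ge0 k.
  by apply: eq_bigr => k _; rewrite ae.
rewrite /trinomial !mulrDl !mulrDr -mulrA !(mulrCA _ psi).
rewrite (shift a1 e1) ?(shift a2 e2) ?(shift a3 e3) // => k;
  by [case: (ge0 k) | case/e_ge0].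
Qed.

End Monomials.

Lemma prod_ord4 (C : comPzRingType) (F : 'I_4 -> C) :
  \prod_(j < 4) F j = F (inord 0) * F (inord 1) * F (inord 2) * F (inord 3).
Proof.
rewrite !big_ord_recr big_ord0 /= mul1r.
by repeat congr (_ * _); congr F; apply: val_inj; rewrite /= inordK.
Qed.

Lemma prod_ord8 (C : comPzRingType) (F : 'I_8 -> C) : \prod_(k < 8) F k =
  F (inord 0) * F (inord 1) * F (inord 2) * F (inord 3) * F (inord 4) * F (inord 5)
  * F (inord 6) * F (inord 7).
Proof.
rewrite !big_ord_recr big_ord0 /= mul1r.
by repeat congr (_ * _); congr F; apply: val_inj; rewrite /= inordK.
Qed.

Lemma expfz_lin (C : fieldType) (a : C) (m0 m1 m2 p q r : int) : a != 0 ->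
  a ^ (m0 * p + m1 * q + m2 * r) = (a ^ m0) ^ p * (a ^ m1) ^ q * (a ^ m2) ^ r.
Proof. by move=> a_neq0; rewrite !expfzDr ?expfz_neq0 // !exprz_exp. Qed.

Section Toric.
Variables (n m : nat) (V : 'M[int]_(n, m)).
Implicit Types (mu nu : 'I_n -> int) (a b : 'I_m -> int).

Definition chi_exp mu k : int := \sum_(i < n) mu i * V i k.

Lemma chiE (C : fieldType) mu (x : 'I_m -> C) : chi V mu x = monomial x (chi_exp mu).
Proof. by []. Qed.

Lemma chi_expD mu nu k : chi_exp (fun i => mu i + nu i) k = chi_exp mu k + chi_exp nu k.
Proof. by rewrite -big_split; apply: eq_bigr => i _; rewrite mulrDl. Qed.

Lemma dotq_vcol mu k : dotq (fun i => (mu i)%:~R) (vcol V k) = (chi_exp mu k)%:~R.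
Proof. by rewrite rmorph_sum; apply: eq_bigr => i _; rewrite rmorphM. Qed.

Lemma in_cone_chi_exp_ge0 p (W : 'M[int]_(n, p)) S k mu :
  in_cone W S (vcol V k) -> (forall j, j \in S -> 0 <= \sum_(i < n) mu i * W i j) ->
  0 <= chi_exp mu k.
Proof.
case=> c [c_ge0 [c_out vk]] mu_ge0; rewrite -(ler0z rat) -dotq_vcol.
have -> : dotq (fun i => (mu i)%:~R) (vcol V k) =
    \sum_(j < p) c j * (\sum_(i < n) mu i * W i j)%:~R.
  rewrite /dotq; under eq_bigr => i _ do rewrite vk mulr_sumr.
  rewrite exchange_big; apply: eq_bigr => j _; rewrite rmorph_sum mulr_sumr.
  by apply: eq_bigr => i _; rewrite rmorphM /vcol mulrCA.
apply: sumr_ge0 => j _; have [jS|jNS] := boolP (j \in S); last by rewrite c_out // mul0r.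
by rewrite mulr_ge0 // ler0z mu_ge0.
Qed.

Lemma monomial_chi_exp_quasitorus (C : fieldType) (t : 'I_m -> C) mu :
  quasitorus V t -> monomial t (chi_exp mu) = 1.
Proof.
case=> t_neq0 t_rel; rewrite /monomial /chi_exp.
under eq_bigr => k _ do
  rewrite (big_morph (fun e => t k ^ e) (fun e1 e2 => expfzDr e1 e2 (t_neq0 k)) (expr0z _)).
rewrite exchange_big /=; apply: big1 => i _.
transitivity ((\prod_(k < m) t k ^ V i k) ^ mu i); last by rewrite t_rel exp1rz.
rewrite (big_morph (fun z => z ^ mu i) (fun z1 z2 => expfzMl z1 z2 (mu i)) (exp1rz _ _)).
by apply: eq_bigr => k _; rewrite exprz_exp mulrC.
Qed.

Lemma monomial_quasitorus (C : fieldType) (t : 'I_m -> C) a b mu :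
  quasitorus V t -> (forall k, a k = b k + chi_exp mu k) -> monomial t a = monomial t b.
Proof.
move=> tH ab; transitivity (monomial t (fun k => b k + chi_exp mu k)).
  by apply: eq_bigr => k _; rewrite ab.
rewrite monomialD ?monomial_chi_exp_quasitorus ?mulr1 // => k /eqP.
by rewrite (negbTE (tH.1 k)).
Qed.

Definition homogeneous_exponents (a1 a2 a3 : 'I_m -> int) (e1 e2 : 'I_n -> int) :=
  [/\ forall k, [/\ 0 <= a1 k, 0 <= a2 k & 0 <= a3 k],
      forall k, a1 k = a3 k + chi_exp e1 k & forall k, a2 k = a3 k + chi_exp e2 k].

Lemma trinomial_quasitorus (C : fieldType) psi (t x : 'I_m -> C) a1 a2 a3 e1 e2 :
  homogeneous_exponents a1 a2 a3 e1 e2 -> quasitorus V t ->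
  trinomial psi (act t x) a1 a2 a3 = monomial t a3 * trinomial psi x a1 a2 a3.
Proof.
case=> _ a1E a2E tH.
by rewrite trinomial_act // ?(monomial_quasitorus tH a1E) ?(monomial_quasitorus tH a2E).
Qed.

Lemma cox_open_act (C : fieldType) (t x : 'I_m -> C) :
  quasitorus V t -> cox_open V x -> cox_open V (act t x).
Proof.
move=> [t_neq0 _] [S [SV xS]]; exists S; split => // k /eqP.
by rewrite mulf_eq0 (negbTE (t_neq0 k)) => /eqP /xS.
Qed.

Lemma in_cone0 v : in_cone V set0 v <-> forall i, v i = 0.
Proof.
split=> [[c [_ [c0 cv]]] i | v0].
  by rewrite cv big1 // => k _; rewrite c0 ?inE // mul0r.
exists (fun _ => 0); split=> //; split=> // i.
by rewrite v0 big1 // => k _; rewrite mul0r.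
Qed.

Lemma in_cone1 k v :
  in_cone V [set k] v <-> exists2 r, 0 <= r & forall i, v i = r * vcol V k i.
Proof.
split=> [[c [c_ge0 [c_out cv]]] | [r r_ge0 vr]].
  exists (c k) => // i; rewrite cv (bigD1 k) //= big1 ?addr0 // => j jk.
  by rewrite c_out ?mul0r // inE.
exists (fun j => if j == k then r else 0); do !split.
- by move=> j; case: eqP.
- by move=> j; rewrite inE => /negPf ->.
- by move=> i; rewrite vr (bigD1 k) //= eqxx big1 ?addr0 // => j /negPf ->; rewrite mul0r.
Qed.

Lemma face_set1 (u : 'I_n -> int) j :
  (exists i, u i != 0) -> (forall k, k != j -> chi_exp u k < chi_exp u j) ->
  face_set V [set j].
Proof.
move=> [i ui_neq0] u_max; exists (fun i => (u i)%:~R); split.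
  by exists i; rewrite intr_eq0.
move=> k; rewrite inE; split=> [/eqP -> l | k_max].
  by rewrite !dotq_vcol ler_int; have [->//|lj] := eqVneq l j; exact/ltW/u_max.
by apply: contraT => kj; have := k_max j; rewrite !dotq_vcol ler_int leNgt u_max.
Qed.

Definition origin_interior : Prop :=
  forall u : 'I_n -> rat, (forall k, dotq u (vcol V k) <= 0) -> forall i, u i = 0.

Lemma face_set_max S : origin_interior -> face_set V S ->
  exists u, forall k, k \in S ->
    0 < dotq u (vcol V k) /\ forall j, dotq u (vcol V j) <= dotq u (vcol V k).
Proof.
move=> V0 [u [[i ui_neq0] u_max]]; exists u => k /u_max k_max; split => //.
rewrite ltNge; apply/negP => k_le0.
by move/eqP: ui_neq0; apply; apply: V0 => j; apply: le_trans (k_max j) k_le0.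
Qed.

End Toric.

Lemma chi_extend (C : fieldType) n m p (V : 'M[int]_(n, m)) (W : 'M[int]_(n, p))
    (s : 'I_p -> 'I_m) mu (x : 'I_m -> C) (y : 'I_p -> C) :
  injective s -> (forall i j, V i (s j) = W i j) -> (forall j, x (s j) = y j) ->
  (forall k, (forall j, s j != k) -> x k = 1) -> chi V mu x = chi W mu y.
Proof.
move=> s_inj Vs xs x1; rewrite /chi /monomial (bigID (mem [set s j | j in 'I_p])) /=.
rewrite [X in _ * X]big1 ?mulr1 => [|k kNs]; last first.
  rewrite x1 ?exp1rz // => j; apply: contraNneq kNs => <-; exact: imset_f.
rewrite (big_imset _ (in2W s_inj)) /=; apply: eq_bigr => j _; rewrite xs.
by congr (_ ^ _); apply: eq_bigr => i _; rewrite Vs.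
Qed.

Definition ivec n (s : seq int) : 'I_n -> int := fun k => nth 0 s k.

Lemma ordE n i (lt_i_n : (i < n.+1)%N) : Ordinal lt_i_n = inord i.
Proof. by apply: val_inj; rewrite /= inordK. Qed.

(* Case analysis on a small ordinal; the resulting indices [Ordinal _] compute,
   unlike [inord i]. *)
Ltac case_I3 := case=> [[|[|[|//]]] ?].
Ltac case_I4 := case=> [[|[|[|[|//]]]] ?].
Ltac case_I8 := case=> [[|[|[|[|[|[|[|[|//]]]]]]]] ?].

Ltac inst_I4 h := move: (h (inord 0)) (h (inord 1)) (h (inord 2)) (h (inord 3)).
Ltac inst_I8 h := move: (h (inord 0)) (h (inord 1)) (h (inord 2)) (h (inord 3))
  (h (inord 4)) (h (inord 5)) (h (inord 6)) (h (inord 7)).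

Lemma chi_exp_LambdaE mu k : chi_exp Lambda mu k =
  mu (inord 0) * nth 0 [:: 1; -1; -1; -1; 2; 0; 0; 0] k
  + mu (inord 1) * nth 0 [:: -1; 1; -1; -1; 0; 2; 0; 0] k
  + mu (inord 2) * nth 0 [:: 0; 0; 2; 0; -1; -1; 1; -1] k.
Proof.
rewrite /chi_exp !big_ord_recr big_ord0 /= !mxE add0r.
by congr (_ * _ + _ * _ + _ * _); congr mu; apply: val_inj; rewrite /= inordK.
Qed.

Lemma chi_exp_WmxE mu j : chi_exp Wmx mu j =
  mu (inord 0) * nth 0 [:: 2; 0; -1; -1] j
  + mu (inord 1) * nth 0 [:: 0; 2; -1; -1] j
  + mu (inord 2) * nth 0 [:: -1; -1; 2; 0] j.
Proof.
rewrite /chi_exp !big_ord_recr big_ord0 /= !mxE add0r.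
by congr (_ * _ + _ * _ + _ * _); congr mu; apply: val_inj; rewrite /= inordK.
Qed.

Ltac chi_exp_compute :=
  rewrite ?chi_expD ?chi_exp_LambdaE ?chi_exp_WmxE /ivec ?inordK //.

Lemma dotq_LambdaE (u : 'I_3 -> rat) k : dotq u (vcol Lambda k) =
  u (inord 0) * (nth 0 [:: 1; -1; -1; -1; 2; 0; 0; 0] k)%:~R
  + u (inord 1) * (nth 0 [:: -1; 1; -1; -1; 0; 2; 0; 0] k)%:~R
  + u (inord 2) * (nth 0 [:: 0; 0; 2; 0; -1; -1; 1; -1] k)%:~R.
Proof.
rewrite /dotq /vcol !big_ord_recr big_ord0 /= !mxE add0r.
by congr (_ * _ + _ * _ + _ * _); congr u; apply: val_inj; rewrite /= inordK.
Qed.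

Lemma dotq_WmxE (u : 'I_3 -> rat) j : dotq u (vcol Wmx j) =
  u (inord 0) * (nth 0 [:: 2; 0; -1; -1] j)%:~R
  + u (inord 1) * (nth 0 [:: 0; 2; -1; -1] j)%:~R
  + u (inord 2) * (nth 0 [:: -1; -1; 2; 0] j)%:~R.
Proof.
rewrite /dotq /vcol !big_ord_recr big_ord0 /= !mxE add0r.
by congr (_ * _ + _ * _ + _ * _); congr u; apply: val_inj; rewrite /= inordK.
Qed.

Lemma sigma_subproof (j : 'I_4) : (nth 0 [:: 4; 5; 2; 3] j < 8)%N.
Proof. by case: j => -[|[|[|[|]]]]. Qed.

(* The column j of W is the column sigma j of Lambda; the remaining columns
   0, 1, 6, 7 of Lambda are the exceptional rays. *)
Definition sigma (j : 'I_4) : 'I_8 := Ordinal (sigma_subproof j).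

Lemma sigma_inj : injective sigma.
Proof.
by move=> j j' /(congr1 val); move: j j'; case_I4; case_I4 => // _; apply: val_inj.
Qed.

Lemma sigma_inord j : (j < 4)%N -> sigma (inord j) = inord (nth 0 [:: 4; 5; 2; 3] j).
Proof. by move=> j4; apply: val_inj; rewrite /= !inordK //; case: j j4 => [|[|[|[|]]]]. Qed.

Lemma Lambda_sigma i j : Lambda i (sigma j) = Wmx i j.
Proof. by rewrite !mxE; case: i => -[|[|[|]]] ?; case: j => -[|[|[|[|]]]]. Qed.

Lemma chi_exp_sigma mu j : chi_exp Lambda mu (sigma j) = chi_exp Wmx mu j.
Proof. by apply: eq_bigr => i _; rewrite Lambda_sigma. Qed.

Definition face_normal (j : 'I_4) : 'I_3 -> int :=
  ivec (nth [::] [:: [:: 2; 0; -1]; [:: 0; 2; -1]; [:: -1; -1; 2]; [:: -1; -1; -1]] j).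

Lemma face_normal_neq0 j : exists i, face_normal j i != 0.
Proof. by exists (inord 2); case: j => -[|[|[|[|]]]] ?; rewrite /face_normal /ivec inordK. Qed.

Lemma Wmx_face1 j : face_set Wmx [set j].
Proof.
apply: (face_set1 (face_normal_neq0 j)) => k.
by rewrite /face_normal; chi_exp_compute; move: j k; case_I4; case_I4.
Qed.

Lemma Lambda_face_sigma j : face_set Lambda [set sigma j].
Proof.
apply: (face_set1 (face_normal_neq0 j)) => k.
by rewrite /face_normal; chi_exp_compute; move: j k; case_I4; case_I8.
Qed.

Lemma Lambda_origin_interior : origin_interior Lambda.
Proof.
move=> u u_le0; inst_I8 u_le0; rewrite !dotq_LambdaE !inordK //= => ? ? ? ? ? ? ? ?.
by case_I3; rewrite ordE; apply/eqP; rewrite eq_le; apply/andP; split; lra.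
Qed.

Lemma Wmx_origin_interior : origin_interior Wmx.
Proof.
move=> u u_le0; inst_I4 u_le0; rewrite !dotq_WmxE !inordK //= => ? ? ? ?.
by case_I3; rewrite ordE; apply/eqP; rewrite eq_le; apply/andP; split; lra.
Qed.

Definition Lambda_nonface_pairs : seq (nat * nat) :=
  [:: (0, 1); (0, 5); (1, 4); (3, 6); (6, 7); (2, 7)]%N.

Lemma Lambda_face_pair S i j : face_set Lambda S -> (i, j) \in Lambda_nonface_pairs ->
  inord i \in S -> inord j \in S -> False.
Proof.
move=> /(face_set_max Lambda_origin_interior) [u u_max].
case: i => [|[|[|[|[|[|[|[|i]]]]]]]] //; case: j => [|[|[|[|[|[|[|[|j]]]]]]]] //=.
all: move=> _ /u_max [i_pos i_max] /u_max [j_pos j_max]; inst_I8 i_max; inst_I8 j_max.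
all: move: i_pos j_pos; rewrite !dotq_LambdaE !inordK //= => *; lra.
Qed.

(* Both proofs below use that the four columns of W add up to zero. *)
Lemma Lambda_face_sigma_all S : face_set Lambda S -> (forall j, sigma j \in S) -> False.
Proof.
move=> /(face_set_max Lambda_origin_interior) [u u_max] S_all.
move: (S_all (inord 0)) (S_all (inord 1)) (S_all (inord 2)) (S_all (inord 3)).
rewrite !sigma_inord //= => /u_max [p4 m4] /u_max [p5 m5] /u_max [p2 m2] /u_max [p3 m3].
move: (m2 (inord 3)) (m3 (inord 4)) (m4 (inord 5)) (m5 (inord 2)) p2.
rewrite !dotq_LambdaE !inordK //= => *; lra.
Qed.

Lemma Wmx_face_proper S : face_set Wmx S -> exists j, j \notin S.
Proof.
move=> /(face_set_max Wmx_origin_interior) [u u_max].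
apply/existsP; apply: contraT; rewrite negb_exists => /forallP S_all.
have M j := u_max j (negbNE (S_all j)).
case: (M (inord 0)) (M (inord 1)) (M (inord 2)) (M (inord 3)) => [p0 m0] [_ m1] [_ m2] [_ m3].
move: (m0 (inord 1)) (m1 (inord 2)) (m2 (inord 3)) (m3 (inord 0)) p0.
rewrite !dotq_WmxE !inordK //= => *; lra.
Qed.

Section Equations.
Variables (C : fieldType) (psi : C).
Implicit Types x : 'I_8 -> C.

Definition BB1 x := trinomial psi x (ivec [:: 2; 0; 0; 0; 2; 0; 0; 0])
  (ivec [:: 0; 2; 0; 0; 0; 2; 0; 0]) (ivec [:: 1; 1; 1; 1; 0; 0; 0; 0]).

Definition BB2 x := trinomial psi x (ivec [:: 0; 0; 2; 0; 0; 0; 2; 0])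
  (ivec [:: 0; 0; 0; 2; 0; 0; 0; 2]) (ivec [:: 0; 0; 0; 0; 1; 1; 1; 1]).

Lemma BB1E x : BB1 x = x (inord 0) ^+ 2 * x (inord 4) ^+ 2 + x (inord 1) ^+ 2 * x (inord 5) ^+ 2
  + psi * (x (inord 0) * x (inord 1) * x (inord 2) * x (inord 3)).
Proof.
rewrite /BB1 /trinomial /monomial !prod_ord8 /ivec !inordK //=.
by rewrite -!exprnP !expr0 !expr1 !mulr1 !mul1r.
Qed.

Lemma BB2E x : BB2 x = x (inord 2) ^+ 2 * x (inord 6) ^+ 2 + x (inord 3) ^+ 2 * x (inord 7) ^+ 2
  + psi * (x (inord 4) * x (inord 5) * x (inord 6) * x (inord 7)).
Proof.
rewrite /BB2 /trinomial /monomial !prod_ord8 /ivec !inordK //=.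
by rewrite -!exprnP !expr0 !expr1 !mulr1 !mul1r.
Qed.

Lemma Y_BBE x : Y_BB psi x <-> BB1 x = 0 /\ BB2 x = 0.
Proof. by rewrite BB1E BB2E /Y_BB /cc /= !mulrA. Qed.

Lemma BB1_homogeneous : homogeneous_exponents Lambda
  (ivec [:: 2; 0; 0; 0; 2; 0; 0; 0]) (ivec [:: 0; 2; 0; 0; 0; 2; 0; 0])
  (ivec [:: 1; 1; 1; 1; 0; 0; 0; 0]) (ivec [:: 1; 0; 0]) (ivec [:: 0; 1; 0]).
Proof. by split=> k; chi_exp_compute; move: k; case_I8. Qed.

Lemma BB2_homogeneous : homogeneous_exponents Lambda
  (ivec [:: 0; 0; 2; 0; 0; 0; 2; 0]) (ivec [:: 0; 0; 0; 2; 0; 0; 0; 2])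
  (ivec [:: 0; 0; 0; 0; 1; 1; 1; 1]) (ivec [:: 0; 0; 1]) (ivec [:: -1; -1; -1]).
Proof. by split=> k; chi_exp_compute; move: k; case_I8. Qed.

Definition BB1_poly : {mpoly C[8]} :=
  'X_(inord 0) ^+ 2 * 'X_(inord 4) ^+ 2 + 'X_(inord 1) ^+ 2 * 'X_(inord 5) ^+ 2
  + psi%:MP * ('X_(inord 0) * 'X_(inord 1) * 'X_(inord 2) * 'X_(inord 3)).

Definition BB2_poly : {mpoly C[8]} :=
  'X_(inord 2) ^+ 2 * 'X_(inord 6) ^+ 2 + 'X_(inord 3) ^+ 2 * 'X_(inord 7) ^+ 2
  + psi%:MP * ('X_(inord 4) * 'X_(inord 5) * 'X_(inord 6) * 'X_(inord 7)).

Lemma meval_BB1 x : BB1_poly.@[x] = BB1 x.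
Proof. by rewrite BB1E /BB1_poly !rmorphD !rmorphM ?rmorphXn /= mevalC !mevalXU. Qed.

Lemma meval_BB2 x : BB2_poly.@[x] = BB2 x.
Proof. by rewrite BB2E /BB2_poly !rmorphD !rmorphM ?rmorphXn /= mevalC !mevalXU. Qed.

Lemma Y_BB_closed : quot_closed Lambda (fun x => cox_open Lambda x /\ Y_BB psi x).
Proof.
split.
  exists (Y_BB psi); split => //; exists (fun p => p = BB1_poly \/ p = BB2_poly) => x.
  rewrite Y_BBE -meval_BB1 -meval_BB2; split=> [[h1 h2] p [->|->] //|h].
  by split; apply: h; [left|right].
move=> t x tH [x_open x_BB]; split; first exact: cox_open_act.
move: x_BB; rewrite !Y_BBE /BB1 /BB2.
rewrite (trinomial_quasitorus _ _ BB1_homogeneous tH).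
by rewrite (trinomial_quasitorus _ _ BB2_homogeneous tH) => -[-> ->]; rewrite !mulr0.
Qed.

End Equations.

Section CoxLift.
Variable C : fieldType.
Implicit Types (y : 'I_4 -> C).

(* The point of the big variety with exceptional coordinates 1 lying over y. *)
Definition cox_lift y : 'I_8 -> C :=
  fun k => nth 1 [:: 1; 1; y (inord 2); y (inord 3); y (inord 0); y (inord 1); 1; 1] k.

Lemma cox_lift_sigma y j : cox_lift y (sigma j) = y j.
Proof. by move: j; case_I4; rewrite /cox_lift /= ordE. Qed.

Lemma chi_cox_lift y mu : chi Lambda mu (cox_lift y) = chi Wmx mu y.
Proof.
apply: (chi_extend mu sigma_inj Lambda_sigma (cox_lift_sigma y)).
case_I8 => //; [move/(_ (@Ordinal 4 2 isT)) | move/(_ (@Ordinal 4 3 isT))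
  | move/(_ (@Ordinal 4 0 isT)) | move/(_ (@Ordinal 4 1 isT))]; by [].
Qed.

Lemma cox_lift_eq0 y k : cox_lift y k = 0 -> exists2 j, k = sigma j & y j = 0.
Proof.
move: k; case_I8; rewrite /cox_lift /= => y0; try by move/eqP: y0; rewrite oner_eq0.
- by exists (inord 2) => //; apply: val_inj; rewrite /= inordK.
- by exists (inord 3) => //; apply: val_inj; rewrite /= inordK.
- by exists (inord 0) => //; apply: val_inj; rewrite /= inordK.
- by exists (inord 1) => //; apply: val_inj; rewrite /= inordK.
Qed.

Lemma Y_BB_cox_lift psi y : Y_LT psi y -> Y_BB psi (cox_lift y).
Proof.
rewrite /Y_LT /Y_BB /cc /cox_lift !inordK //= => -[L1 L2].
by split; [rewrite -L1 | rewrite -L2]; ring.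
Qed.

End CoxLift.

(* The dual cone of the maximal cone of the fan of X omitting w_j0, i.e. the
   characters regular on the chart y_j0 <> 0. *)
Definition chart_dual (j0 : 'I_4) (mu : 'I_3 -> int) : Prop :=
  forall j, j != j0 -> 0 <= chi_exp Wmx mu j.

Definition cox_lift_units (j0 j1 : 'I_4) : seq nat :=
  [:: 0; 1; 6; 7; nat_of_ord (sigma j0); nat_of_ord (sigma j1)]%N.

Section Chart.
Variables (C : fieldType) (psi : C) (x : 'I_8 -> C) (y : 'I_4 -> C) (j0 j1 : 'I_4).
Hypotheses (y_j0 : y j0 != 0) (y_j1 : y j1 != 0)
  (chi_chart : forall mu, chart_dual j0 mu -> chi Lambda mu x = chi Wmx mu y)
  (x_zero_chart : forall mu, chart_dual j0 mu ->
     forall k, x k = 0 -> 0 <= chi_exp Lambda mu k).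

Lemma cox_lift_zero_chart mu : chart_dual j0 mu ->
  forall k, cox_lift y k = 0 -> 0 <= chi_exp Lambda mu k.
Proof.
move=> mu_chart k /cox_lift_eq0 [j -> yj0]; rewrite chi_exp_sigma; apply: mu_chart.
by apply: contraNneq y_j0 => <-; apply/eqP.
Qed.

Lemma x_neq0_chart mu k :
  chart_dual j0 mu -> chi Wmx mu y != 0 -> chi_exp Lambda mu k != 0 -> x k != 0.
Proof.
move=> mu_chart chi_neq0 muk_neq0; apply: contraNneq chi_neq0 => xk0.
by rewrite -chi_chart // chiE (monomial_eq0 xk0 muk_neq0).
Qed.

Lemma chi_neq0_chart mu :
  (forall j, chi_exp Wmx mu j != 0 -> j \in [:: j0; j1]) -> chi Wmx mu y != 0.
Proof.
by move=> mu_supp; apply: monomial_neq0 => j /mu_supp; rewrite !inE => /orP[] /eqP ->.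
Qed.

Lemma cox_lift_neq0_chart k : nat_of_ord k \in cox_lift_units j0 j1 -> cox_lift y k != 0.
Proof.
rewrite /cox_lift_units !inE => /or4P[| | |/or3P[| |]] /eqP k_eq.
all: try by rewrite /cox_lift k_eq oner_eq0.
all: by rewrite (val_inj k_eq) cox_lift_sigma.
Qed.

(* Write a3 - chi_exp m = c - g with c, g >= 0: the factor x^g is a unit on the
   chart, guaranteed by mi, and c only involves coordinates of cox_lift y
   that do not vanish. *)
Lemma trinomial_chart a1 a2 a3 e1 e2 m mi :
  homogeneous_exponents Lambda a1 a2 a3 e1 e2 ->
  chart_dual j0 m -> chart_dual j0 (fun i => m i + e1 i) ->
  chart_dual j0 (fun i => m i + e2 i) -> chart_dual j0 mi ->
  (forall j, chi_exp Wmx mi j != 0 -> j \in [:: j0; j1]) ->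
  (forall k, a3 k < chi_exp Lambda m k -> chi_exp Lambda mi k != 0) ->
  (forall k, chi_exp Lambda m k < a3 k -> nat_of_ord k \in cox_lift_units j0 j1) ->
  trinomial psi (cox_lift y) a1 a2 a3 = 0 -> trinomial psi x a1 a2 a3 = 0.
Proof.
move=> [a_ge0 a1E a2E] m_chart m1_chart m2_chart mi_chart mi_supp g_supp c_supp lift0.
pose g k := Num.max 0 (chi_exp Lambda m k - a3 k).
pose c k := Num.max 0 (a3 k - chi_exp Lambda m k).
have gc k : a3 k + g k = c k + chi_exp Lambda m k by rewrite /g /c; lia.
have shift (z : 'I_8 -> C) :
    (forall mu, chart_dual j0 mu -> forall k, z k = 0 -> 0 <= chi_exp Lambda mu k) ->
    trinomial psi z a1 a2 a3 * monomial z g = monomial z c *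
      trinomial psi z (chi_exp Lambda (fun i => m i + e1 i))
        (chi_exp Lambda (fun i => m i + e2 i)) (chi_exp Lambda m).
  move=> z_zero; apply: trinomial_shift => [k|k|k|k|k zk0].
  - by rewrite a1E chi_expD; have := gc k; lia.
  - by rewrite a2E chi_expD; have := gc k; lia.
  - exact: gc.
  - by have [? ? ?] := a_ge0 k; split; rewrite // /g /c; lia.
  - by split; apply: z_zero.
have same_chi z : trinomial psi z (chi_exp Lambda (fun i => m i + e1 i))
    (chi_exp Lambda (fun i => m i + e2 i)) (chi_exp Lambda m) =
  chi Lambda (fun i => m i + e1 i) z + chi Lambda (fun i => m i + e2 i) z
    + psi * chi Lambda m z by [].
have c_neq0 : monomial (cox_lift y) c != 0.
  apply: monomial_neq0 => k ck; apply/cox_lift_neq0_chart/c_supp.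
  by move: ck; rewrite /c; lia.
have g_neq0 : monomial x g != 0.
  apply: monomial_neq0 => k gk; apply: (x_neq0_chart mi_chart (chi_neq0_chart mi_supp)).
  by apply: g_supp; move: gk; rewrite /g; lia.
have := shift _ cox_lift_zero_chart; rewrite lift0 mul0r => /esym/eqP.
rewrite mulf_eq0 (negbTE c_neq0) /= same_chi !chi_cox_lift -!chi_chart // -same_chi.
move=> /eqP tri_x0; have := shift _ x_zero_chart; rewrite tri_x0 mulr0 => /eqP.
by rewrite mulf_eq0 (negbTE g_neq0) orbF => /eqP.
Qed.

End Chart.

(* Certificates (mi, m1, m2) for the chart y_j0 <> 0 when also y_j1 <> 0: the
   character chi^mi only involves y_j0 and y_j1, and m1, m2 are the vectors m
   of trinomial_chart for BB1 and BB2. *)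
Definition chart_certificate (j0 j1 : 'I_4) : seq int * seq int * seq int :=
  match nat_of_ord j0, nat_of_ord j1 with
  | 0%N, 2%N => ([:: -1; 1; 2], [:: -1; 0; 0], [:: -1; 1; 1])
  | 0%N, 3%N => ([:: -3; -1; -2], [:: -1; 0; 0], [:: -2; 0; -1])
  | 1%N, 2%N => ([:: 1; -1; 2], [:: 0; -1; 0], [:: 1; -1; 1])
  | 1%N, 3%N => ([:: -1; -3; -2], [:: 0; -1; 0], [:: 0; -2; -1])
  | 2%N, 0%N => ([:: 1; -1; -2], [:: 0; -1; -2], [:: 0; 0; -1])
  | 2%N, 1%N => ([:: -1; 1; -2], [:: -1; 0; -2], [:: 0; 0; -1])
  | 3%N, 0%N => ([:: 3; 1; 2], [:: 2; 1; 2], [:: 1; 1; 1])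
  | 3%N, 1%N => ([:: 1; 3; 2], [:: 1; 2; 2], [:: 1; 1; 1])
  | _, _ => ([::], [::], [::])
  end.

Lemma Y_BB_chart (C : fieldType) psi (x : 'I_8 -> C) y (j0 j1 : 'I_4) :
  ((j0 < 2) != (j1 < 2))%N -> y j0 != 0 -> y j1 != 0 ->
  (forall mu, chart_dual j0 mu -> chi Lambda mu x = chi Wmx mu y) ->
  (forall mu, chart_dual j0 mu -> forall k, x k = 0 -> 0 <= chi_exp Lambda mu k) ->
  Y_LT psi y -> Y_BB psi x.
Proof.
move=> half y_j0 y_j1 chi_x x_zero /Y_BB_cox_lift /Y_BBE[lift1 lift2]; apply/Y_BBE.
case cert: (chart_certificate j0 j1) => [[mi m1] m2].
split; [apply: (trinomial_chart y_j0 y_j1 chi_x x_zero (m := ivec m1) (mi := ivec mi)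
          BB1_homogeneous)
      | apply: (trinomial_chart y_j0 y_j1 chi_x x_zero (m := ivec m2) (mi := ivec mi)
          BB2_homogeneous)] => //.
all: clear y_j0 y_j1 chi_x x_zero; move: j0 j1 half cert.
all: case_I4; case_I4 => //= _ [mi_eq m1_eq m2_eq]; subst mi m1 m2.
all: by move=> k; chi_exp_compute; move: k; case_I8.
Qed.

Section LTZeros.
Variables (C : fieldType) (psi : C) (y : 'I_4 -> C).
Hypotheses (psi_neq0 : psi != 0) (y_LT : Y_LT psi y).

Lemma mul_sqr_eq0 (a b : C) : a * b = 0 -> a ^+ 2 + b ^+ 2 = 0 -> a = 0 /\ b = 0.
Proof.
move=> /eqP; rewrite mulf_eq0 => /orP[] /eqP-> /eqP;
  by rewrite expr0n /= ?add0r ?addr0 expf_eq0 /= => /eqP.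
Qed.

Lemma Y_LT_zero_across : y (inord 0) = 0 \/ y (inord 1) = 0 ->
  y (inord 2) = 0 \/ y (inord 3) = 0 -> forall j, y j = 0.
Proof.
move: y_LT; rewrite /Y_LT /cc /= => -[L1 L2] y01 y23.
have [y0 y1] : y (inord 0) = 0 /\ y (inord 1) = 0.
  apply: mul_sqr_eq0; first by case: y01 => ->; rewrite ?mul0r ?mulr0.
  by rewrite -L1 -mulrA; case: y23 => ->; rewrite ?mul0r ?mulr0 addr0.
have [y2 y3] : y (inord 2) = 0 /\ y (inord 3) = 0.
  apply: mul_sqr_eq0; first by case: y23 => ->; rewrite ?mul0r ?mulr0.
  by rewrite -L2 -mulrA y0 mul0r mulr0 add0r.
by case_I4; rewrite ordE.
Qed.

Lemma Y_LT_zero_pair j j' : j != j' -> y j = 0 -> y j' = 0 -> forall l, y l = 0.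
Proof.
move: y_LT; rewrite /Y_LT /cc /= => -[L1 L2].
have within a b c d : a = 0 -> b = 0 -> a ^+ 2 + b ^+ 2 + psi * c * d = 0 -> c = 0 \/ d = 0.
  move=> -> -> /eqP; rewrite expr0n /= !add0r -mulrA !mulf_eq0 (negbTE psi_neq0) /=.
  by case/orP => /eqP; [left|right].
have L2' : y (inord 2) ^+ 2 + y (inord 3) ^+ 2 + psi * y (inord 0) * y (inord 1) = 0.
  by rewrite -L2; ring.
have w01 := fun y0 y1 => within _ _ _ _ y0 y1 L1.
have w23 := fun y2 y3 => within _ _ _ _ y2 y3 L2'.
move: j j'; case_I4; case_I4; rewrite // !ordE => _ yj yj'.
all: by apply: Y_LT_zero_across; tauto.
Qed.

Lemma Y_LT_neq0_pair j j' : cox_open Wmx y -> j != j' -> y j != 0 \/ y j' != 0.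
Proof.
move=> [S [SW yS]] jj'; have [yj|] := eqVneq (y j) 0; [right|by left].
apply/eqP => yj'; have [l /negP] := Wmx_face_proper SW; apply; apply: yS.
exact: Y_LT_zero_pair jj' yj yj' l.
Qed.

End LTZeros.

Lemma Y_BB_of_toric_map_rel (C : fieldType) psi (x : 'I_8 -> C) y :
  psi != 0 -> cox_open Wmx y -> Y_LT psi y -> toric_map_rel Lambda Wmx x y -> Y_BB psi x.
Proof.
move=> psi_neq0 y_open y_LT [S [SW [yS [x_cone chi_S]]]].
have [j0 j0S] := Wmx_face_proper SW.
have S_chart mu : chart_dual j0 mu -> forall j, j \in S -> 0 <= chi_exp Wmx mu j.
  by move=> mu_chart j jS; apply: mu_chart; apply: contraNneq j0S => <-.
have [j1 half y_j1] : exists2 j1 : 'I_4, ((j0 < 2) != (j1 < 2))%N & y j1 != 0.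
  have neq0 a b : (a < 4)%N -> (b < 4)%N -> a != b ->
      y (inord a) != 0 \/ y (inord b) != 0.
    move=> a4 b4 ab; apply: (Y_LT_neq0_pair psi_neq0 y_LT) => //.
    by rewrite -val_eqE /= !inordK.
  case: (ltnP j0 2) => j0_half.
    by have [y2|y3] := neq0 2%N 3%N isT isT isT; [exists (inord 2) | exists (inord 3)];
      rewrite ?inordK ?j0_half.
  by have [y0|y1] := neq0 0%N 1%N isT isT isT; [exists (inord 0) | exists (inord 1)];
    rewrite ?inordK ?(leq_gtF j0_half).
apply: (Y_BB_chart half (yS _ j0S) y_j1 _ _ y_LT) => mu /S_chart mu_S.
  exact: chi_S.
by move=> k /x_cone xk; apply: in_cone_chi_exp_ge0 xk mu_S.
Qed.

Section Descent.
Variables (C : fieldType) (x : 'I_8 -> C) (a0 a1 a6 a7 : C).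
Hypotheses (a0_neq0 : a0 != 0) (a1_neq0 : a1 != 0) (a6_neq0 : a6 != 0) (a7_neq0 : a7 != 0).
Hypotheses (x0E : x (inord 0) = a0 * a0) (x1E : x (inord 1) = a1 * a1)
  (x6E : x (inord 6) = a6 * a6) (x7E : x (inord 7) = a7 * a7).

Definition phi_coords : 'I_4 -> C := fun j =>
  nth 0 [:: x (inord 4) * (a0 * a0 * a6 * a7); x (inord 5) * (a1 * a1 * a6 * a7);
            x (inord 2) * (a0 * a1 * (a6 * a6)); x (inord 3) * (a0 * a1 * (a7 * a7))] j.

(* The exponents of a0 on both sides agree because 2 v_0 = 2 w_0 + w_2 + w_3,
   and similarly for the other exceptional rays. *)
Lemma chi_phi_coords mu : chi Lambda mu x = chi Wmx mu phi_coords.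
Proof.
rewrite !chiE /monomial prod_ord8 prod_ord4 !chi_exp_LambdaE !chi_exp_WmxE.
rewrite /phi_coords !inordK //= x0E x1E x6E x7E !expfzMl.
rewrite !(expfz_lin _ _ _ _ _ _ a0_neq0) !(expfz_lin _ _ _ _ _ _ a1_neq0).
rewrite !(expfz_lin _ _ _ _ _ _ a6_neq0) !(expfz_lin _ _ _ _ _ _ a7_neq0).
rewrite ?expr0z ?expr1z ?exprN1 -?exprnP ?expr2.
field; by repeat (apply/andP; split); apply: expfz_neq0.
Qed.

Lemma Y_LT_phi_coords psi : Y_BB psi x -> Y_LT psi phi_coords.
Proof.
rewrite /Y_BB /Y_LT /cc /phi_coords !inordK //= x0E x1E x6E x7E => -[E1 E2]; split.
  by rewrite -[RHS](mulr0 ((a6 * a7) ^+ 2)) -E1; ring.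
by rewrite -[RHS](mulr0 ((a0 * a1) ^+ 2)) -E2; ring.
Qed.

Lemma phi_coords_zero k : x k = 0 -> exists2 j, k = sigma j & phi_coords j = 0.
Proof.
have sq_neq0 (a : C) : a != 0 -> a * a = 0 -> False.
  by move=> a_neq0 /eqP; rewrite mulf_eq0 (negbTE a_neq0).
have sig j i : (j < 4)%N -> nth 0%N [:: 4; 5; 2; 3] j = i -> inord i = sigma (inord j).
  by move=> j4 ji; rewrite sigma_inord // ji.
move: k; case_I8; rewrite ordE => xk0.
- by case: (sq_neq0 _ a0_neq0); rewrite -x0E.
- by case: (sq_neq0 _ a1_neq0); rewrite -x1E.
- by exists (inord 2); [exact: sig | rewrite /phi_coords inordK //= xk0 mul0r].
- by exists (inord 3); [exact: sig | rewrite /phi_coords inordK //= xk0 mul0r].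
- by exists (inord 0); [exact: sig | rewrite /phi_coords inordK //= xk0 mul0r].
- by exists (inord 1); [exact: sig | rewrite /phi_coords inordK //= xk0 mul0r].
- by case: (sq_neq0 _ a6_neq0); rewrite -x6E.
- by case: (sq_neq0 _ a7_neq0); rewrite -x7E.
Qed.

Lemma phi_coords_eq0 j : phi_coords j = 0 -> x (sigma j) = 0.
Proof.
have [s0 s1 s2 s3] : [/\ a0 * a0 * a6 * a7 != 0, a1 * a1 * a6 * a7 != 0,
    a0 * a1 * (a6 * a6) != 0 & a0 * a1 * (a7 * a7) != 0] by split; rewrite !mulf_neq0.
move: j; case_I4 => /eqP; rewrite /phi_coords /sigma /= mulf_eq0.
all: rewrite ?(negbTE s0) ?(negbTE s1) ?(negbTE s2) ?(negbTE s3) orbF => /eqP.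
all: by rewrite ordE.
Qed.

End Descent.

Lemma Y_BB_exceptional_neq0 (C : fieldType) psi (x : 'I_8 -> C) :
  cox_open Lambda x -> Y_BB psi x ->
  [/\ x (inord 0) != 0, x (inord 1) != 0, x (inord 6) != 0 & x (inord 7) != 0].
Proof.
case=> S [SL xS]; rewrite /Y_BB /cc /= => -[E1 E2].
have nonface i j : (i, j) \in Lambda_nonface_pairs ->
    x (inord i) = 0 -> x (inord j) = 0 -> False.
  by move=> ij /xS iS /xS jS; apply: Lambda_face_pair SL ij iS jS.
have sqr_mul0 (a b : C) : a ^+ 2 * b ^+ 2 = 0 -> a = 0 \/ b = 0.
  by move/eqP; rewrite mulf_eq0 !expf_eq0 /= => /orP[] /eqP; [left|right].
split; apply/eqP => xk0.
- have /sqr_mul0[] : x (inord 1) ^+ 2 * x (inord 5) ^+ 2 = 0 by rewrite -E1 xk0; ring.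
  + exact: nonface 0%N 1%N isT xk0.
  + exact: nonface 0%N 5%N isT xk0.
- have /sqr_mul0[] : x (inord 0) ^+ 2 * x (inord 4) ^+ 2 = 0 by rewrite -E1 xk0; ring.
  + by move/(nonface 0%N 1%N isT); apply.
  + exact: nonface 1%N 4%N isT xk0.
- have /sqr_mul0[] : x (inord 3) ^+ 2 * x (inord 7) ^+ 2 = 0 by rewrite -E2 xk0; ring.
  + by move/(nonface 3%N 6%N isT); apply.
  + exact: nonface 6%N 7%N isT xk0.
- have /sqr_mul0[] : x (inord 2) ^+ 2 * x (inord 6) ^+ 2 = 0 by rewrite -E2 xk0; ring.
  + by move/(nonface 2%N 7%N isT); apply.
  + by move/(nonface 6%N 7%N isT); apply.
Qed.

Lemma toric_map_rel_sigma (C : fieldType) (x : 'I_8 -> C) y j0 :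
  (forall mu, chi Lambda mu x = chi Wmx mu y) -> (forall j, j != j0 -> y j != 0) ->
  (forall k, x k = 0 -> k = sigma j0) ->
  [/\ cox_open Wmx y, toric_map_rel Lambda Wmx x y & iso_locus Lambda Wmx y].
Proof.
move=> chi_xy y_neq0 x_zero.
have y_zero j : y j = 0 -> j = j0.
  by move=> yj0; case: (eqVneq j j0) => // /y_neq0; rewrite yj0 eqxx.
split.
- by exists [set j0]; split=> [|j /y_zero ->]; rewrite ?inE //; exact: Wmx_face1.
- exists [set j0]; split; first exact: Wmx_face1.
  split; first by move=> j; rewrite inE => /y_neq0.
  split=> [k /x_zero -> | mu _]; last exact: chi_xy.
  by apply/in_cone1; exists 1 => // i; rewrite mul1r /vcol Lambda_sigma.
have [yj0|yj0_neq0] := eqVneq (y j0) 0.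
  exists [set sigma j0]; split; first by right; exact: Lambda_face_sigma.
  have -> : [set j | y j == 0] = [set j0].
    by apply/setP => j; rewrite !inE; apply/eqP/eqP => [/y_zero|->].
  move=> v; rewrite !in_cone1.
  by split=> -[r r_ge0 vr]; exists r => // i; rewrite vr /vcol Lambda_sigma.
exists set0; split; first by left.
have -> : [set j | y j == 0] = set0.
  by apply/setP => j; rewrite !inE; apply/negbTE/eqP => /[dup] /y_zero ->; apply/eqP.
by move=> v; rewrite !in_cone0.
Qed.

Lemma Y_BB_in_preimage (C : numClosedFieldType) psi (x : 'I_8 -> C) :
  psi != 0 -> cox_open Lambda x -> Y_BB psi x ->
  exists y, cox_open Wmx y /\ toric_map_rel Lambda Wmx x y /\ Y_LT psi y /\
    iso_locus Lambda Wmx y.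
Proof.
move=> psi_neq0 x_open x_BB.
have [x0 x1 x6 x7] := Y_BB_exceptional_neq0 x_open x_BB.
have sqrt_neq0 (z : C) : z != 0 -> sqrtC z != 0 by rewrite sqrtC_eq0.
have sqrtE (z : C) : z = sqrtC z * sqrtC z by rewrite -expr2 sqrtCK.
have a0 := sqrt_neq0 _ x0; have a1 := sqrt_neq0 _ x1.
have a6 := sqrt_neq0 _ x6; have a7 := sqrt_neq0 _ x7.
pose y := phi_coords x (sqrtC (x (inord 0))) (sqrtC (x (inord 1)))
  (sqrtC (x (inord 6))) (sqrtC (x (inord 7))).
have y_LT : Y_LT psi y := Y_LT_phi_coords (sqrtE _) (sqrtE _) (sqrtE _) (sqrtE _) x_BB.
have chi_xy mu : chi Lambda mu x = chi Wmx mu y.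
  exact: chi_phi_coords a0 a1 a6 a7 (sqrtE _) (sqrtE _) (sqrtE _) (sqrtE _) mu.
have [j0 y_neq0] : exists j0, forall j, j != j0 -> y j != 0.
  case: (pickP (fun j => y j == 0)) => [j0 /eqP yj0 | y_nz]; last first.
    by exists (inord 0) => j _; rewrite y_nz.
  exists j0 => j jj0; apply/eqP => yj; case: x_open => S [SL xS].
  apply: (Lambda_face_sigma_all SL) => l; apply: xS.
  exact: (phi_coords_eq0 a0 a1 a6 a7) (Y_LT_zero_pair psi_neq0 y_LT jj0 yj yj0 l).
have x_zero k : x k = 0 -> k = sigma j0.
  move=> /(phi_coords_zero a0 a1 a6 a7 (sqrtE _) (sqrtE _) (sqrtE _) (sqrtE _)) [j -> yj].
  by case: (eqVneq j j0) => [-> // | /y_neq0]; rewrite /y yj eqxx.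
have [y_open x_rel_y y_iso] := toric_map_rel_sigma chi_xy y_neq0 x_zero.
by exists y.
Qed.

Theorem proposition2p4 (R : realType) :
  exists bad : seq R[i], forall psi : R[i], psi \notin bad ->
    forall x : 'I_8 -> R[i], cox_open Lambda x ->
      (Y_BB psi x <-> strict_transform Lambda Wmx (Y_LT psi) x).
Proof.
exists [:: 0] => psi; rewrite inE => psi_neq0 x x_open.
split=> [x_BB | [_ x_closure]].
  split=> // A _; apply; split=> //; exact: Y_BB_in_preimage.
have [] // := x_closure _ (Y_BB_closed psi).
move=> x' [x'_open [y [y_open [x'_rel_y [y_LT _]]]]]; split=> //.
exact: Y_BB_of_toric_map_rel psi_neq0 y_open y_LT x'_rel_y.
Qed.
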